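(* Let $(C,\mathfrak p,\mathfrak d)$ be a regular $q$-cycle coalgebra. Then $\mathfrak p_{11}^1=\mathfrak d_{11}^1$.
   Context: $K$ is an algebraically closed field of characteristic $0$ and $n\ge2$. $C$ is the coalgebra dual to $K[y]/\langle y^n\rangle$: basis $x_0,\dots,x_{n-1}$, $\Delta(x_i)=\sum_{j+k=i}x_j\otimes x_k$, $\epsilon(x_i)=\delta_{i0}$; $C\otimes C$ has the tensor product coalgebra structure; Sweedler notation $\Delta(b)=b_{(1)}\otimes b_{(2)}$. For linear maps $\mathfrak p,\mathfrak d\colon C\otimes C\to C$ write $a\cdot b=\mathfrak p(a\otimes b)$, $a:b=\mathfrak d(a\otimes b)$, $\mathfrak p(x_i\otimes x_j)=\sum_{k=0}^{n-1}\mathfrak p_{ij}^kx_k$, $\mathfrak d(x_i\otimes x_j)=\sum_{k=0}^{n-1}\mathfrak d_{ij}^kx_k$. A triple $(C,\mathfrak p,\mathfrak d)$ with $\mathfrak p,\mathfrak d$ coalgebra morphisms is a regular $q$-magma coalgebra if there are coalgebra morphisms $a\otimes b\mapsto a^b$, $a\otimes b\mapsto a_b$ from $C\otimes C$ to $C$ with $a^{b_{(1)}}\cdot b_{(2)}=(a\cdot b_{(1)})^{b_{(2)}}=\epsilon(b)a$ and $(a:b_{(2)})_{b_{(1)}}=a_{b_{(2)}}:b_{(1)}=\epsilon(b)a$. It is a regular $q$-cycle coalgebra if moreover for all $a,b,c$: (1) $(a\cdot b_{(1)})\cdot(c:b_{(2)})=(a\cdot c_{(2)})\cdot(b\cdot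 c_{(1)})$; (2) $(a\cdot b_{(1)}):(c\cdot b_{(2)})=(a:c_{(2)})\cdot(b:c_{(1)})$; (3) $(a:b_{(1)}):(c:b_{(2)})=(a:c_{(2)}):(b\cdot c_{(1)})$. *)

From mathcomp Require Import all_boot all_algebra.
Set Implicit Arguments. Unset Strict Implicit. Unset Printing Implicit Defensive.
Import GRing.Theory.
Local Open Scope ring_scope.

(* The coalgebra C dual to K[y]/<y^n>: elements are coordinate vectors
   a = sum_i a i x_i, with i : 'I_n.  Elements of C (x) C are coordinate
   arrays t = sum_{i,j} t i j (x_i (x) x_j).  A linear map C (x) C -> C is
   given by its structure constants f : f (x_i (x) x_j) = sum_k f i j k x_k. *)

Section QCycle.
Variables (K : fieldType) (n : nat).

Definition vec := 'I_n -> K.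
Definition tens := 'I_n -> 'I_n -> K.
Definition sconst := 'I_n -> 'I_n -> 'I_n -> K.

Definition veq (u v : vec) : Prop := forall k, u k = v k.

Definition bas (j : 'I_n) : vec := fun i => (i == j)%:R.

Definition vscale (c : K) (a : vec) : vec := fun k => c * a k.

Definition eps (a : vec) : K := \sum_(i < n) ((i : nat) == 0%N)%:R * a i.

Definition comul (a : vec) : tens :=
  fun j k => \sum_(i < n) ((j + k)%N == i)%:R * a i.

Definition bil (f : sconst) (a b : vec) : vec :=
  fun k => \sum_(i < n) \sum_(j < n) a i * b j * f i j k.

Definition lin (f : sconst) (t : tens) : vec :=
  fun k => \sum_(i < n) \sum_(j < n) t i j * f i j k.

Definition eps2 (t : tens) : K :=
  \sum_(i < n) \sum_(j < n) ((i : nat) == 0%N)%:R * ((j : nat) == 0%N)%:R * t i j.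

(* (f (x) f)(Delta_{C(x)C}(t)), as an element of C (x) C, where
   Delta_{C(x)C}(x_i (x) x_j) = sum_{a+b=i, c+d=j} (x_a (x) x_c) (x) (x_b (x) x_d) *)
Definition ff_comul2 (f : sconst) (t : tens) : tens :=
  fun k l => \sum_(i < n) \sum_(j < n) t i j *
     \sum_(a < n) \sum_(b < n) \sum_(c < n) \sum_(d < n)
        ((a + b)%N == i)%:R * ((c + d)%N == j)%:R * (f a c k * f b d l).

Definition coalg_morph (f : sconst) : Prop :=
  (forall t : tens, forall k l, comul (lin f t) k l = ff_comul2 f t k l) /\
  (forall t : tens, eps (lin f t) = eps2 t).

(* Sweedler sum: sw b F = F(b_(1), b_(2)) for F bilinear *)
Definition sw (b : vec) (F : vec -> vec -> vec) : vec :=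
  fun m => \sum_(j < n) \sum_(k < n) comul b j k * F (bas j) (bas k) m.

Definition regular_qmagma_coalg (p d : sconst) : Prop :=
  coalg_morph p /\ coalg_morph d /\
  exists up dn : sconst, coalg_morph up /\ coalg_morph dn /\
   forall a b : vec,
     (* a^{b(1)} . b(2) = eps(b) a *)
     veq (sw b (fun b1 b2 => bil p (bil up a b1) b2)) (vscale (eps b) a) /\
     (* (a . b(1))^{b(2)} = eps(b) a *)
     veq (sw b (fun b1 b2 => bil up (bil p a b1) b2)) (vscale (eps b) a) /\
     (* (a : b(2))_{b(1)} = eps(b) a *)
     veq (sw b (fun b1 b2 => bil dn (bil d a b2) b1)) (vscale (eps b) a) /\
     (* a_{b(2)} : b(1) = eps(b) a *)
     veq (sw b (fun b1 b2 => bil d (bil dn a b2) b1)) (vscale (eps b) a).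

Definition regular_qcycle_coalg (p d : sconst) : Prop :=
  regular_qmagma_coalg p d /\
  forall a b c : vec,
    (* (1) (a.b(1)).(c:b(2)) = (a.c(2)).(b.c(1)) *)
    veq (sw b (fun b1 b2 => bil p (bil p a b1) (bil d c b2)))
        (sw c (fun c1 c2 => bil p (bil p a c2) (bil p b c1))) /\
    (* (2) (a.b(1)):(c.b(2)) = (a:c(2)).(b:c(1)) *)
    veq (sw b (fun b1 b2 => bil d (bil p a b1) (bil p c b2)))
        (sw c (fun c1 c2 => bil p (bil d a c2) (bil d b c1))) /\
    (* (3) (a:b(1)):(c:b(2)) = (a:c(2)):(b.c(1)) *)
    veq (sw b (fun b1 b2 => bil d (bil d a b1) (bil d c b2)))
        (sw c (fun c1 c2 => bil d (bil d a c2) (bil p b c1))).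

End QCycle.

From mathcomp Require Import all_boot all_algebra.
From mathcomp Require Import zify ring.
Set Implicit Arguments. Unset Strict Implicit. Unset Printing Implicit Defensive.
Import GRing.Theory.
Local Open Scope ring_scope.

(* Write f_{ij}^k for the structure constants of a coalgebra map f : C (x) C -> C.
   Dually f is an algebra map y |-> phi(y, z) into K[y, z]/(y^n, z^n), and f_{ij}^k
   is the coefficient of y^i z^j in phi^k; comultiplicativity is the recursion
   f_{ij}^{k+l} = sum_{a <= i, c <= j} f_{ac}^k f_{i-a,j-c}^l, whose left side is 0
   when k + l >= n.  Nilpotency gives phi(0, 0) = 0, hence f_{ij}^k = 0 for i + j < k,
   and the coefficient of y z^(n-1) in phi^n = 0 is n f_{10}^1 (f_{01}^1)^(n-1).
   Regularity makes p_{10}^1 and d_{10}^1 invertible, so in characteristic 0 both p and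
   d have f_{01}^1 = 0, and on x_0, x_1 they reduce, modulo x_2, ..., x_{n-1}, to
   x_0 x_0 = x_0, x_1 x_0 = f_{10}^1 x_1, x_0 x_1 = 0, x_1 x_1 = f_{11}^1 x_1.
   The x_1-coefficients of the cycle identities (1) and (3) on x_0, x_1 then give
   p_{11}^1 d_{11}^1 = (p_{11}^1)^2 = (d_{11}^1)^2. *)

Section Basis.
Variables (K : fieldType) (n : nat).
Implicit Types (f : sconst K n) (u v : vec K n) (i j k r s : 'I_n).

Lemma sum_delta (G : 'I_n -> K) i0 : \sum_i (i == i0)%:R * G i = G i0.
Proof.
under eq_bigr do rewrite mulr_natl mulrb.
by rewrite -big_mkcond big_pred1_eq.
Qed.

Lemma sum_delta2 (G : 'I_n -> 'I_n -> K) i0 j0 :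
  \sum_i \sum_j (i == i0)%:R * (j == j0)%:R * G i j = G i0 j0.
Proof.
under eq_bigr do under eq_bigr do rewrite -mulrA.
under eq_bigr do rewrite -big_distrr /= sum_delta.
exact: sum_delta.
Qed.

Lemma sum_nat_single (N : nat) (G : nat -> K) c0 : (c0 < N)%N ->
  (forall c, (c < N)%N -> c != c0 -> G c = 0) -> \sum_(0 <= c < N) G c = G c0.
Proof.
move=> lt_c0N G0; rewrite big_mkord (bigD1 (Ordinal lt_c0N)) //= big1 ?addr0 // => c neq_c.
by apply: G0 => //; rewrite -val_eqE in neq_c.
Qed.

Definition tbas i0 j0 : tens K n := fun i j => (i == i0)%:R * (j == j0)%:R.

Lemma lin_tbas f i j k : lin f (tbas i j) k = f i j k.
Proof. exact: sum_delta2. Qed.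

Lemma eps2_tbas i j : eps2 (tbas i j) = (((i : nat) == 0%N) && ((j : nat) == 0%N))%:R.
Proof.
rewrite /eps2 -[RHS](sum_delta2
  (fun i j : 'I_n => (((i : nat) == 0%N) && ((j : nat) == 0%N))%:R) i j).
by apply: eq_bigr => i' _; apply: eq_bigr => j' _; rewrite -natrM mulnb mulrC.
Qed.

Lemma ff_comul2_tbas f i0 j0 k l : ff_comul2 f (tbas i0 j0) k l =
  \sum_(a < n) \sum_(b < n) \sum_(c < n) \sum_(d < n)
     ((a + b)%N == i0)%:R * ((c + d)%N == j0)%:R * (f a c k * f b d l).
Proof. exact: (sum_delta2 (fun i j : 'I_n => _)). Qed.

Lemma comul_bas i j k : comul (bas K i) j k = ((j + k)%N == i)%:R.
Proof. by rewrite /comul; under eq_bigr do rewrite mulrC; rewrite sum_delta. Qed.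

Lemma sw_bas i F k : sw (bas K i) F k =
  \sum_(j < n) \sum_(l < n) ((j + l)%N == i)%:R * F (bas K j) (bas K l) k.
Proof. by apply: eq_bigr => j _; apply: eq_bigr => l _; rewrite comul_bas. Qed.

Definition concentrated u r := forall k, k != r -> u k = 0.

Lemma concentrated_bas r : concentrated (bas K r) r.
Proof. by move=> k /negbTE; rewrite /bas => ->. Qed.

Lemma bil_concentrated f u v r s k : concentrated u r -> concentrated v s ->
  bil f u v k = u r * v s * f r s k.
Proof.
move=> ur vs; rewrite /bil (bigD1 r) //= (bigD1 s) //= !big1 ?addr0 //.
- by move=> i /ur ui0; apply: big1 => j _; rewrite ui0 !mul0r.
- by move=> j /vs vj0; rewrite vj0 mulr0 mul0r.
Qed.

Lemma bil_bas f i j k : bil f (bas K i) (bas K j) k = f i j k.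
Proof.
rewrite (bil_concentrated f k (@concentrated_bas i) (@concentrated_bas j)).
by rewrite /bas !eqxx !mul1r.
Qed.

End Basis.

Section StructureConstants.
Variables (K : fieldType) (m : nat).
Local Notation n := m.+2.
Implicit Types (f : sconst K n) (u : vec K n).

(* [sc f i j k] is f_{ij}^k; [inord] sends indices [>= n] to 0, so only indices
   below n are meaningful. *)
Definition sc f (i j k : nat) : K := f (inord i) (inord j) (inord k).

Lemma eps_ord0 u : eps u = u ord0.
Proof.
rewrite /eps (bigD1 ord0) //= mul1r big1 ?addr0 // => i.
by rewrite -val_eqE => /negbTE ->; rewrite mul0r.
Qed.

Lemma sum_nat_delta (x : nat) (G : 'I_n -> K) :
  \sum_(q < n) (x == q)%:R * G q = if (x < n)%N then G (inord x) else 0.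
Proof.
case: ltnP => [lt_xn | le_nx].
- rewrite -(sum_delta G); apply: eq_bigr => q _.
  by rewrite -val_eqE /= inordK // eq_sym.
- by rewrite big1 // => q _; rewrite (_ : _ == _ = false) ?mul0r //; have := ltn_ord q; lia.
Qed.

Lemma sum_shift_delta (a i : nat) (G : 'I_n -> K) : (i < n)%N ->
  \sum_(b < n) ((a + b)%N == i)%:R * G b = if (a <= i)%N then G (inord (i - a)) else 0.
Proof.
move=> lt_in; case: leqP => [le_ai | lt_ia].
- have shift_b (b : 'I_n) : ((a + b)%N == i) = (i - a == b)%N.
    by apply/idP/idP => /eqP eq_ab; apply/eqP; lia.
  under eq_bigr do rewrite shift_b.
  by rewrite sum_nat_delta ifT //; lia.
- by rewrite big1 // => b _; rewrite (_ : _ == _ = false) ?mul0r //; lia.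
Qed.

Lemma sum_antidiagonal (i : nat) (G : 'I_n -> 'I_n -> K) : (i < n)%N ->
  \sum_(a < n) \sum_(b < n) ((a + b)%N == i)%:R * G a b
    = \sum_(0 <= a < i.+1) G (inord a) (inord (i - a)).
Proof.
move=> lt_in; rewrite big_mkord.
rewrite (big_ord_widen n (fun a => G (inord a) (inord (i - a)))) // [RHS]big_mkcond.
by apply: eq_bigr => a _; rewrite sum_shift_delta // ltnS inord_val.
Qed.

End StructureConstants.

Section CoalgebraMorphism.
Variables (K : fieldType) (m : nat) (f : sconst K m.+2).
Hypothesis f_morph : coalg_morph f.
Local Notation n := m.+2.

Lemma sc_counit i j : (i < n)%N -> (j < n)%N ->
  sc f i j 0 = ((i == 0) && (j == 0))%:R.
Proof.
case: f_morph => _ eps_f lt_in lt_jn; have := eps_f (tbas K (inord i) (inord j)).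
rewrite eps_ord0 lin_tbas eps2_tbas !inordK // => <-.
by congr (f _ _ _); apply: val_inj; rewrite /= inordK.
Qed.

Lemma sc_comul i j k l : (i < n)%N -> (j < n)%N -> (k < n)%N -> (l < n)%N ->
  (if (k + l < n)%N then sc f i j (k + l) else 0) =
  \sum_(0 <= a < i.+1) \sum_(0 <= c < j.+1) sc f a c k * sc f (i - a) (j - c) l.
Proof.
case: f_morph => comul_f _ lt_in lt_jn lt_kn lt_ln.
have := comul_f (tbas K (inord i) (inord j)) (inord k) (inord l).
rewrite /comul; under eq_bigr do rewrite lin_tbas.
rewrite ff_comul2_tbas !inordK // sum_nat_delta => ->.
transitivity (\sum_(a < n) \sum_(b < n) ((a + b)%N == i)%:R *
  \sum_(c < n) \sum_(d < n) ((c + d)%N == j)%:R * (f a c (inord k) * f b d (inord l))).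
  apply: eq_bigr => a _; apply: eq_bigr => b _; rewrite mulr_sumr.
  by apply: eq_bigr => c _; rewrite mulr_sumr; apply: eq_bigr => d _; rewrite !mulrA.
rewrite sum_antidiagonal //; apply: eq_bigr => a _.
by rewrite sum_antidiagonal.
Qed.

Lemma sc001_eq0 : sc f 0 0 1 = 0.
Proof.
have sc00_pow k : (k < n)%N -> sc f 0 0 k = sc f 0 0 1 ^+ k.
  elim: k => [|k IHk] lt_kn; first by rewrite sc_counit.
  have := sc_comul (i := 0) (j := 0) (k := k) (l := 1) isT isT (ltnW lt_kn) isT.
  by rewrite addn1 lt_kn !big_nat1 IHk ?exprSr // ltnW.
have := sc_comul (i := 0) (j := 0) (k := 1) (l := m.+1) isT isT isT (ltnSn _).
rewrite add1n ltnn !big_nat1 subnn [sc f _ _ m.+1]sc00_pow // -exprS => /esym/eqP.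
by rewrite expf_eq0 => /eqP.
Qed.

Lemma sc_gt_eq0 i j k : (i + j < k)%N -> (k < n)%N -> sc f i j k = 0.
Proof.
elim: k i j => [|k IHk] i j // lt_ijk lt_kn.
case: k IHk lt_ijk lt_kn => [|k] IHk lt_ijk lt_kn.
  have [-> ->] : i = 0%N /\ j = 0%N by lia.
  exact: sc001_eq0.
have := sc_comul (i := i) (j := j) (k := 1) (l := k.+1)
  ltac:(lia) ltac:(lia) isT ltac:(lia).
rewrite add1n lt_kn => ->; rewrite big_nat big1 // => a /andP[_ lt_ai].
rewrite big_nat big1 // => c /andP[_ lt_cj].
have [[-> ->] | pos_ac] : (a = 0 /\ c = 0)%N \/ (0 < a + c)%N by lia.
  by rewrite sc001_eq0 mul0r.
by rewrite IHk ?mulr0 //; lia.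
Qed.

Lemma sc0_diag k : (k < n)%N -> sc f 0 k k = sc f 0 1 1 ^+ k.
Proof.
elim: k => [|k IHk] lt_kn; first by rewrite sc_counit.
have := sc_comul (i := 0) (j := k.+1) (k := 1) (l := k) isT lt_kn isT (ltnW lt_kn).
rewrite add1n lt_kn big_nat1 => ->.
rewrite (sum_nat_single (c0 := 1)) // => [|c lt_c neq_c1].
  by rewrite subSS !subn0 IHk ?exprS // ltnW.
have [-> | lt_1c] : c = 0%N \/ (1 < c)%N by lia.
  by rewrite sc001_eq0 mul0r.
by rewrite [sc f _ _ k]sc_gt_eq0 ?mulr0 //; lia.
Qed.

Lemma sc1_subdiag k : (k < n)%N ->
  (if (k.+1 < n)%N then sc f 1 k k.+1 else 0) = k.+1%:R * sc f 1 0 1 * sc f 0 1 1 ^+ k.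
Proof.
elim: k => [|k IHk] lt_kn; first by rewrite mul1r mulr1.
have := sc_comul (i := 1) (j := k.+1) (k := 1) (l := k.+1) isT lt_kn isT lt_kn.
rewrite add1n => ->; rewrite big_nat_recr //= big_nat1 subn0 subnn.
rewrite (sum_nat_single (c0 := 1)) // => [|c lt_c neq_c1]; last first.
  have [-> | lt_1c] : c = 0%N \/ (1 < c)%N by lia.
    by rewrite sc001_eq0 mul0r.
  by rewrite [sc f _ _ k.+1]sc_gt_eq0 ?mulr0 //; lia.
rewrite (sum_nat_single (c0 := 0)) // => [|c lt_c neq_c0]; last first.
  by rewrite [sc f _ _ k.+1]sc_gt_eq0 ?mulr0 //; lia.
have := IHk (ltnW lt_kn); rewrite lt_kn subSS !subn0 [sc f 0 k.+1 _]sc0_diag // => ->.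
by rewrite exprS !mulrS; ring.
Qed.

Lemma sc011_eq0 : [pchar K] =i pred0 -> sc f 1 0 1 != 0 -> sc f 0 1 1 = 0.
Proof.
move=> /pcharf0P natr_eq0 nz10; have := sc1_subdiag (k := m.+1) (ltnSn _).
rewrite ltnn => /esym/eqP; rewrite !mulf_eq0 natr_eq0 (negbTE nz10) orbF /=.
by rewrite expf_eq0 => /andP[_ /eqP].
Qed.

Lemma sc10_eq0 k : (k < n)%N -> k != 1%N -> sc f 1 0 k = 0.
Proof.
case: k => [|[|k]] // lt_kn _; first by rewrite sc_counit.
by rewrite sc_gt_eq0.
Qed.

Lemma sc_low_eq0 i j : sc f 0 1 1 = 0 -> (i <= 1)%N -> (j <= 1)%N ->
  forall k, (k < n)%N -> k != maxn i j -> sc f i j k = 0.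
Proof.
move=> f011 le_i1 le_j1 k lt_kn neq_k.
case: k lt_kn neq_k => [|k] lt_kn neq_k.
  by rewrite sc_counit; [case: i j le_i1 le_j1 neq_k => [|[|i]] [|[|j]] | lia | lia].
have [lt_ijk | le_kij] := ltnP (i + j) k.+1; first exact: sc_gt_eq0.
have [-> -> eq_k1] : [/\ i = 1, j = 1 & k = 1]%N by split; lia.
rewrite eq_k1 in lt_kn *.
by have := sc1_subdiag (k := 1) isT; rewrite lt_kn f011 expr1 mulr0.
Qed.

End CoalgebraMorphism.

Section LowDegree.
Variables (K : fieldType) (m : nat).
Local Notation n := m.+2.
Local Notation x_ i := (bas K (inord i) : vec K n).
Implicit Types (f g h : sconst K n).

Lemma sw_bas_inord i F k : (i < n)%N ->
  sw (x_ i) F k = \sum_(0 <= a < i.+1) F (x_ a) (x_ (i - a)) k.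
Proof. by move=> lt_in; rewrite sw_bas inordK // sum_antidiagonal. Qed.

Lemma sw_bas0 F k : sw (x_ 0) F k = F (x_ 0) (x_ 0) k.
Proof. by rewrite sw_bas_inord // big_nat1. Qed.

Lemma sw_bas1 F k : sw (x_ 1) F k = F (x_ 0) (x_ 1) k + F (x_ 1) (x_ 0) k.
Proof. by rewrite sw_bas_inord // big_nat_recr //= big_nat1. Qed.

Lemma eps_bas0 : eps (x_ 0) = 1.
Proof. by rewrite eps_ord0 /bas -val_eqE /= inordK. Qed.

Lemma concentrated_sc f i j r : (r < n)%N ->
  (forall k, (k < n)%N -> k != r -> sc f i j k = 0) ->
  concentrated (bil f (x_ i) (x_ j)) (inord r).
Proof.
move=> lt_rn sc_eq0 k neq_kr; rewrite bil_bas -[k]inord_val; apply: sc_eq0 => //.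
by apply: contra neq_kr => /eqP eq_kr; apply/eqP/val_inj; rewrite /= inordK.
Qed.

Lemma bil_bil10_bas0 f g : coalg_morph g ->
  bil f (bil g (x_ 1) (x_ 0)) (x_ 0) (inord 1) = sc g 1 0 1 * sc f 1 0 1.
Proof.
move=> g_morph.
have conc10 := concentrated_sc (i := 1) (j := 0) (r := 1) isT (sc10_eq0 g_morph).
rewrite (bil_concentrated f _ conc10 (@concentrated_bas _ _ (inord 0))).
by rewrite bil_bas /bas eqxx mulr1.
Qed.

Lemma bil_bil_low f g h i1 j1 i2 j2 k :
  coalg_morph g -> sc g 0 1 1 = 0 -> coalg_morph h -> sc h 0 1 1 = 0 ->
  (i1 <= 1)%N -> (j1 <= 1)%N -> (i2 <= 1)%N -> (j2 <= 1)%N ->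
  bil f (bil g (x_ i1) (x_ j1)) (bil h (x_ i2) (x_ j2)) (inord k) =
  sc g i1 j1 (maxn i1 j1) * sc h i2 j2 (maxn i2 j2) * sc f (maxn i1 j1) (maxn i2 j2) k.
Proof.
move=> g_morph g011 h_morph h011 le_i1 le_j1 le_i2 le_j2.
rewrite (bil_concentrated f _ (concentrated_sc _ (sc_low_eq0 g_morph g011 le_i1 le_j1))
   (concentrated_sc _ (sc_low_eq0 h_morph h011 le_i2 le_j2))) ?bil_bas //; lia.
Qed.

End LowDegree.

Lemma regular_sc10_neq0 (K : fieldType) m (p d : sconst K m.+2) :
  regular_qmagma_coalg p d -> sc p 1 0 1 != 0 /\ sc d 1 0 1 != 0.
Proof.
case=> _ [d_morph [up [dn [up_morph [_ reg]]]]].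
have [reg1 [_ [reg3 _]]] := reg (bas K (inord 1)) (bas K (inord 0)).
move: (reg1 (inord 1)) (reg3 (inord 1)).
rewrite !sw_bas0 /= !bil_bil10_bas0 // /vscale eps_bas0 /bas eqxx mul1r => up_p d_dn.
have mul_eq1_neq0 (x y : K) : x * y = 1 -> (x != 0) && (y != 0).
  by move=> xy1; rewrite -negb_or -mulf_eq0 xy1 oner_neq0.
by have [/andP[_ ->] /andP[-> _]] := (mul_eq1_neq0 _ _ up_p, mul_eq1_neq0 _ _ d_dn).
Qed.

Lemma qcycle_relations_eq (K : fieldType) (a1 b1 a b : K) : a1 != 0 -> b1 != 0 ->
  a1 * b * a + a * b1 * a = a * a1 * a + a1 * a * a ->
  b1 * b * b + b * b1 * b = b * a1 * b + b1 * a * b ->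
  a * a1 = a1 * a1 * a -> b * b1 = b1 * a1 * b ->
  a1 * b1 * a = a * a1 -> b1 * b1 * b = b * b1 -> a = b.
Proof.
move=> nz_a1 nz_b1 e1_111 e3_111 e1_110 e3_110 e1_101 e3_101.
have a1a : a1 * a = a by apply: (mulfI nz_a1); rewrite mulrA -e1_110 mulrC.
have b1a : b1 * a = a by apply: (mulfI nz_a1); rewrite mulrA e1_101 mulrC.
have a1b : a1 * b = b by apply: (mulfI nz_b1); rewrite mulrA -e3_110 mulrC.
have b1b : b1 * b = b by apply: (mulfI nz_b1); rewrite mulrA e3_101 mulrC.
have ba_aa : b * a = a * a.
  by move: e1_111; rewrite a1b a1a -!mulrA a1a b1a => /addIr.
have bb_ab : b * b = a * b.
  by move: e3_111; rewrite b1b b1a -!mulrA a1b b1b => /addrI.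
have : (a - b) ^+ 2 = (a * a - b * a) + (b * b - a * b) by ring.
by rewrite ba_aa bb_ab !subrr addr0 => /eqP; rewrite expf_eq0 subr_eq0 => /eqP.
Qed.

Theorem proposition2p3 (K : closedFieldType) (hK : [pchar K] =i pred0)
  (n : nat) (hn : (1 < n)%N) (p d : sconst K n) :
  regular_qcycle_coalg p d ->
  p (Ordinal hn) (Ordinal hn) (Ordinal hn) = d (Ordinal hn) (Ordinal hn) (Ordinal hn).
Proof.
case: n hn p d => [|[|m]] // hn p d [qmagma cycle].
have -> : Ordinal hn = inord 1 by apply: val_inj; rewrite /= inordK.
have [[p_morph [d_morph _]] [p10 d10]] := (qmagma, regular_sc10_neq0 qmagma).
have p011 := sc011_eq0 p_morph hK p10; have d011 := sc011_eq0 d_morph hK d10.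
pose x i := bas K (inord i : 'I_m.+2).
have [e1_111 [_ e3_111]] := cycle (x 1%N) (x 1%N) (x 1%N).
have [e1_110 [_ e3_110]] := cycle (x 1%N) (x 1%N) (x 0%N).
have [e1_101 [_ e3_101]] := cycle (x 1%N) (x 0%N) (x 1%N).
move: (e1_111 (inord 1)) (e3_111 (inord 1)) (e1_110 (inord 1)) (e3_110 (inord 1))
  (e1_101 (inord 1)) (e3_101 (inord 1)).
rewrite /x !sw_bas0 !sw_bas1 /= !bil_bil_low // /maxn /= !sc_counit // p011 d011.
rewrite !(mulr0, mul0r, mulr1, add0r, addr0).
exact: qcycle_relations_eq p10 d10.
Qed.
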